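(* Suppose there exist an $(N_1,N_2,N_3)$-achievable $(n_1,n_2,n_3,k_1,k_2,T)_{\mathbb{F}}$ streaming code and an $(N_1,N_2,N_3)$-achievable $(n_1',n_2',n_3',k_1',k_2',T)_{\mathbb{F}}$ streaming code. Then for all nonnegative integers $A,B$ there exists an $(N_1,N_2,N_3)$-achievable $(An_1+Bn_1',\,An_2+Bn_2',\,An_3+Bn_3',\,Ak_1+Bk_1',\,Ak_2+Bk_2',\,T)_{\mathbb{F}}$ streaming code.
   Context: Network: two sources, one relay, one destination; no direct source–destination link. Source $i\in\{1,2\}$ has messages $s_{t,i}\in\mathbb{F}^{k_i}$, $t\ge0$, over a finite field $\mathbb{F}$. A time-invariant $(n_1,n_2,n_3,k_1,k_2,T)_{\mathbb{F}}$ streaming code (unbounded memory): source $i$ sends at time $t$ a packet $x^{(1)}_{t,i}\in\mathbb{F}^{n_i}$, a fixed function of $s_{0,i},\dots,s_{t,i}$; a relay function $g$, the same at every time $t$, takes the packets received from both sources at times $t-T,\dots,t$ together with the relay's previously produced estimates of past source messages, and outputs a packet $x^{(2)}_t\in\mathbb{F}^{n_3}$ and estimates of $s_{t-T,1},s_{t-T,2}$; the destination outputs at time $t+T$ estimates $\hat s_{t,i}$ from its received packets up to time $t+T$. Each link is a packet erasure channel (received packet is the sent one or the erasure symbol $*$). An $N$-erasure sequence has exactly $N$ erased times; link source $i\to$relay suffers an arbitrary $N_i$-erasure sequence, relay$\to$destination an arbitrary $N_3$-erasure sequence. The code is $(N_1,N_2,N_3)$-achievable if $\hat s_{t,i}=s_{t,i}$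 always. *)

From HB Require Import structures.
From mathcomp Require Import all_boot all_algebra all_field.
Set Implicit Arguments. Unset Strict Implicit. Unset Printing Implicit Defensive.

Definition erasure_seq (N : nat) (e : nat -> bool) : Prop :=
  exists s : seq nat, [/\ uniq s, size s = N & forall t, e t = (t \in s)].

(* Output of a packet erasure channel: None plays the role of the erasure symbol *. *)
Definition chan (X : Type) (e : nat -> bool) (x : nat -> X) : nat -> option X :=
  fun t => if e t then None else Some (x t).

(* Values at the times max(0, t-T), ..., t (in increasing order). *)
Definition window (X : Type) (T t : nat) (y : nat -> X) : seq X :=
  map y (iota (t - T) (t - (t - T)).+1).

Record stream_code (F : finFieldType) (n1 n2 n3 k1 k2 T : nat) := StreamCode {
  (* source i encoder: packet at time t from [:: s_0,i; ...; s_t,i] *)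
  enc1 : seq 'rV[F]_k1 -> 'rV[F]_n1;
  enc2 : seq 'rV[F]_k2 -> 'rV[F]_n2;
  (* time-invariant relay function: received packets from source 1 and 2 at
     times t-T..t, and the relay's previously produced estimates of
     (s_0,1,s_0,2), ..., (s_(t-T-1),1, s_(t-T-1),2); outputs the relay packet
     at time t and estimates of (s_(t-T),1, s_(t-T),2). *)
  relay : seq (option 'rV[F]_n1) -> seq (option 'rV[F]_n2) ->
          seq ('rV[F]_k1 * 'rV[F]_k2) -> 'rV[F]_n3 * ('rV[F]_k1 * 'rV[F]_k2);
  (* destination: estimate of (s_t,1, s_t,2) from received packets at times 0..t+T *)
  dec : seq (option 'rV[F]_n3) -> 'rV[F]_k1 * 'rV[F]_k2
}.

Section Run.
Variables (F : finFieldType) (n1 n2 n3 k1 k2 T : nat).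
Variable C : stream_code F n1 n2 n3 k1 k2 T.
Variables (s1 : nat -> 'rV[F]_k1) (s2 : nat -> 'rV[F]_k2).
Variables (e1 e2 e3 : nat -> bool).

Definition src_pkt1 (t : nat) : 'rV[F]_n1 := enc1 C (map s1 (iota 0 t.+1)).
Definition src_pkt2 (t : nat) : 'rV[F]_n2 := enc2 C (map s2 (iota 0 t.+1)).

Definition rcv1 : nat -> option 'rV[F]_n1 := chan e1 src_pkt1.
Definition rcv2 : nat -> option 'rV[F]_n2 := chan e2 src_pkt2.

Definition relay_out (t : nat) (h : seq ('rV[F]_k1 * 'rV[F]_k2)) :=
  relay C (window T t rcv1) (window T t rcv2) h.

(* relay_hist m = the relay's estimates of the messages at times 0..m-1
   (the estimate of time-j messages is produced at time j+T) *)
Fixpoint relay_hist (m : nat) : seq ('rV[F]_k1 * 'rV[F]_k2) :=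
  match m with
  | 0 => [::]
  | m'.+1 => let h := relay_hist m' in rcons h (relay_out (m' + T) h).2
  end.

Definition relay_pkt (t : nat) : 'rV[F]_n3 := (relay_out t (relay_hist (t - T))).1.

Definition rcv3 : nat -> option 'rV[F]_n3 := chan e3 relay_pkt.

Definition dest_est (t : nat) : 'rV[F]_k1 * 'rV[F]_k2 :=
  dec C (map rcv3 (iota 0 (t + T).+1)).

End Run.

Definition achievable (F : finFieldType) (n1 n2 n3 k1 k2 T : nat)
    (N1 N2 N3 : nat) (C : stream_code F n1 n2 n3 k1 k2 T) : Prop :=
  forall (s1 : nat -> 'rV[F]_k1) (s2 : nat -> 'rV[F]_k2) (e1 e2 e3 : nat -> bool),
    erasure_seq N1 e1 -> erasure_seq N2 e2 -> erasure_seq N3 e3 ->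
    forall t, dest_est C s1 s2 e1 e2 e3 t = (s1 t, s2 t).

From mathcomp Require Import all_boot all_algebra all_field.
Set Implicit Arguments. Unset Strict Implicit. Unset Printing Implicit Defensive.

(* Two codes can be run side by side: split every message and packet into a
   left and a right block and let each component code handle its block.  An
   erasure removes a whole packet, hence both blocks at once, so each component
   sees exactly its own erasure patterns and the whole run of the concatenated
   code projects onto the runs of the two components; if both decode their
   blocks correctly, so does the concatenation.  Iterating, starting from the
   trivial code with all dimensions 0, gives A copies of one code next to B
   copies of the other. *)

Definition map_pair (A B A' B' : Type) (f : A -> A') (g : B -> B') (p : A * B) :
  A' * B' := (f p.1, g p.2).
Arguments map_pair {A B A' B'} f g !p /.

Lemma map_window (X Y : Type) (f : X -> Y) (T t : nat) (y : nat -> X) :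
  map f (window T t y) = window T t (f \o y).
Proof. by rewrite /window -map_comp. Qed.

Lemma eq_window (X : Type) (T t : nat) (y y' : nat -> X) :
  y =1 y' -> window T t y = window T t y'.
Proof. by move=> eq_y; apply: eq_map. Qed.

Section CodeMorphism.

Variables (F : finFieldType) (T : nat).
Variables (n1 n2 n3 k1 k2 m1 m2 m3 l1 l2 : nat).
Variables (D : stream_code F n1 n2 n3 k1 k2 T) (C : stream_code F m1 m2 m3 l1 l2 T).
Variables (f1 : 'rV[F]_n1 -> 'rV[F]_m1) (f2 : 'rV[F]_n2 -> 'rV[F]_m2).
Variables (f3 : 'rV[F]_n3 -> 'rV[F]_m3).
Variables (g1 : 'rV[F]_k1 -> 'rV[F]_l1) (g2 : 'rV[F]_k2 -> 'rV[F]_l2).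

Hypothesis enc1_morph : forall xs, enc1 C (map g1 xs) = f1 (enc1 D xs).
Hypothesis enc2_morph : forall xs, enc2 C (map g2 xs) = f2 (enc2 D xs).
Hypothesis relay_morph : forall w1 w2 h,
  relay C (map (omap f1) w1) (map (omap f2) w2) (map (map_pair g1 g2) h) =
  map_pair f3 (map_pair g1 g2) (relay D w1 w2 h).
Hypothesis dec_morph : forall ys,
  dec C (map (omap f3) ys) = map_pair g1 g2 (dec D ys).

Variables (s1 : nat -> 'rV[F]_k1) (s2 : nat -> 'rV[F]_k2) (e1 e2 e3 : nat -> bool).

Lemma rcv1_morph : omap f1 \o rcv1 D s1 e1 =1 rcv1 C (g1 \o s1) e1.
Proof.
move=> t; rewrite /= /rcv1 /chan; case: (e1 t) => //=.
by rewrite /src_pkt1 map_comp enc1_morph.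
Qed.

Lemma rcv2_morph : omap f2 \o rcv2 D s2 e2 =1 rcv2 C (g2 \o s2) e2.
Proof.
move=> t; rewrite /= /rcv2 /chan; case: (e2 t) => //=.
by rewrite /src_pkt2 map_comp enc2_morph.
Qed.

Lemma relay_out_morph t h :
  relay_out C (g1 \o s1) (g2 \o s2) e1 e2 t (map (map_pair g1 g2) h) =
  map_pair f3 (map_pair g1 g2) (relay_out D s1 s2 e1 e2 t h).
Proof.
by rewrite /relay_out -(eq_window T t rcv1_morph) -(eq_window T t rcv2_morph)
  -!map_window relay_morph.
Qed.

Lemma relay_hist_morph m :
  map (map_pair g1 g2) (relay_hist D s1 s2 e1 e2 m) =
  relay_hist C (g1 \o s1) (g2 \o s2) e1 e2 m.
Proof. by elim: m => [|m IHm] //=; rewrite map_rcons -IHm relay_out_morph. Qed.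

Lemma rcv3_morph :
  omap f3 \o rcv3 D s1 s2 e1 e2 e3 =1 rcv3 C (g1 \o s1) (g2 \o s2) e1 e2 e3.
Proof.
move=> t; rewrite /= /rcv3 /chan; case: (e3 t) => //=.
by rewrite /relay_pkt -relay_hist_morph relay_out_morph.
Qed.

Lemma dest_est_morph t :
  map_pair g1 g2 (dest_est D s1 s2 e1 e2 e3 t) =
  dest_est C (g1 \o s1) (g2 \o s2) e1 e2 e3 t.
Proof. by rewrite /dest_est -dec_morph -map_comp (eq_map rcv3_morph). Qed.

End CodeMorphism.

Section CodeSum.

Variables (F : finFieldType) (T : nat).
Variables (n1 n2 n3 k1 k2 n1' n2' n3' k1' k2' : nat).
Variables (C : stream_code F n1 n2 n3 k1 k2 T) (C' : stream_code F n1' n2' n3' k1' k2' T).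

Definition code_sum :
    stream_code F (n1 + n1') (n2 + n2') (n3 + n3') (k1 + k1') (k2 + k2') T :=
  @StreamCode _ _ _ _ _ _ T
    (fun xs => row_mx (enc1 C (map lsubmx xs)) (enc1 C' (map rsubmx xs)))
    (fun xs => row_mx (enc2 C (map lsubmx xs)) (enc2 C' (map rsubmx xs)))
    (fun w1 w2 h =>
       let r := relay C (map (omap lsubmx) w1) (map (omap lsubmx) w2)
                  (map (map_pair lsubmx lsubmx) h) in
       let r' := relay C' (map (omap rsubmx) w1) (map (omap rsubmx) w2)
                   (map (map_pair rsubmx rsubmx) h) in
       (row_mx r.1 r'.1, (row_mx r.2.1 r'.2.1, row_mx r.2.2 r'.2.2)))
    (fun ys => let d := dec C (map (omap lsubmx) ys) in
               let d' := dec C' (map (omap rsubmx) ys) in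
               (row_mx d.1 d'.1, row_mx d.2 d'.2)).

Lemma code_sum_lsubmx s1 s2 e1 e2 e3 t :
  map_pair lsubmx lsubmx (dest_est code_sum s1 s2 e1 e2 e3 t) =
  dest_est C (lsubmx \o s1) (lsubmx \o s2) e1 e2 e3 t.
Proof.
apply: (dest_est_morph (f1 := lsubmx) (f2 := lsubmx) (f3 := lsubmx))
  => [xs|xs|w1 w2 h|ys]; rewrite /= ?row_mxKl //.
  by case: relay => ? [].
by case: dec.
Qed.

Lemma code_sum_rsubmx s1 s2 e1 e2 e3 t :
  map_pair rsubmx rsubmx (dest_est code_sum s1 s2 e1 e2 e3 t) =
  dest_est C' (rsubmx \o s1) (rsubmx \o s2) e1 e2 e3 t.
Proof.
apply: (dest_est_morph (f1 := rsubmx) (f2 := rsubmx) (f3 := rsubmx))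
  => [xs|xs|w1 w2 h|ys]; rewrite /= ?row_mxKr //.
  by case: relay => ? [].
by case: dec.
Qed.

Lemma achievable_code_sum N1 N2 N3 :
  achievable N1 N2 N3 C -> achievable N1 N2 N3 C' ->
  achievable N1 N2 N3 code_sum.
Proof.
move=> achC achC' s1 s2 e1 e2 e3 E1 E2 E3 t.
have := code_sum_lsubmx s1 s2 e1 e2 e3 t; rewrite achC //.
have := code_sum_rsubmx s1 s2 e1 e2 e3 t; rewrite achC' //.
case: (dest_est _ _ _ _ _ _ _) => d1 d2 [/= r1 r2] [/= l1 l2].
by rewrite -[d1]hsubmxK -[d2]hsubmxK r1 r2 l1 l2 !hsubmxK.
Qed.

End CodeSum.

Definition code0 (F : finFieldType) (T : nat) : stream_code F 0 0 0 0 0 T :=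
  @StreamCode _ _ _ _ _ _ T (fun _ => 0%R) (fun _ => 0%R)
    (fun _ _ _ => (0%R, (0%R, 0%R))) (fun _ => (0%R, 0%R)).

Lemma achievable_code0 (F : finFieldType) (T N1 N2 N3 : nat) :
  achievable N1 N2 N3 (code0 F T).
Proof.
move=> s1 s2 e1 e2 e3 _ _ _ t; rewrite /dest_est /=.
by rewrite [s1 t]thinmx0 [s2 t]thinmx0.
Qed.

Definition achievable_dims (F : finFieldType) (n1 n2 n3 k1 k2 T N1 N2 N3 : nat) :=
  exists C : stream_code F n1 n2 n3 k1 k2 T, achievable N1 N2 N3 C.

Section AchievableDims.

Variables (F : finFieldType) (T N1 N2 N3 : nat).

Lemma achievable_dimsD n1 n2 n3 k1 k2 n1' n2' n3' k1' k2' :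
  achievable_dims F n1 n2 n3 k1 k2 T N1 N2 N3 ->
  achievable_dims F n1' n2' n3' k1' k2' T N1 N2 N3 ->
  achievable_dims F (n1 + n1') (n2 + n2') (n3 + n3') (k1 + k1') (k2 + k2') T N1 N2 N3.
Proof.
by move=> [C achC] [C' achC']; exists (code_sum C C'); apply: achievable_code_sum.
Qed.

Lemma achievable_dimsM A n1 n2 n3 k1 k2 :
  achievable_dims F n1 n2 n3 k1 k2 T N1 N2 N3 ->
  achievable_dims F (A * n1) (A * n2) (A * n3) (A * k1) (A * k2) T N1 N2 N3.
Proof.
move=> achC; elim: A => [|A IHA].
  by rewrite !mul0n; exists (code0 F T); apply: achievable_code0.
by rewrite !mulSn; apply: achievable_dimsD.
Qed.

End AchievableDims.

Theorem lemma6 (F : finFieldType) (n1 n2 n3 k1 k2 n1' n2' n3' k1' k2' T : nat)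
    (N1 N2 N3 : nat) :
  (exists C : stream_code F n1 n2 n3 k1 k2 T, achievable N1 N2 N3 C) ->
  (exists C' : stream_code F n1' n2' n3' k1' k2' T, achievable N1 N2 N3 C') ->
  forall A B : nat,
    exists C'' : stream_code F (A * n1 + B * n1') (A * n2 + B * n2')
                   (A * n3 + B * n3') (A * k1 + B * k1') (A * k2 + B * k2') T,
      achievable N1 N2 N3 C''.
Proof.
by move=> achC achC' A B; apply: achievable_dimsD; apply: achievable_dimsM.
Qed.
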